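(* Let $x_1,\dots,x_n$ be fixed data points and let $s$ be a real-valued function of $n$ arguments that is symmetric under permutations of its arguments. Let $I_1,\dots,I_n$ be i.i.d. uniform on $\{1,\dots,n\}$ (a bootstrap resample), set $X_i^*=x_{I_i}$, $s^*=s(X_1^*,\dots,X_n^* )$ and $w_j^*=\#\{i: I_i=j\}$ for $j=1,\dots,n$. Write $\mathbb{E}_*,\mathrm{Var}_*,\mathrm{Cov}_*$ for expectation, variance and covariance with respect to this resampling distribution, and let $e_j=\mathbb{E}_*[s^*\mid I_1=j]$ and $s_0=\mathbb{E}_*[s^*]$. Let $l^*$ be the orthogonal projection (in $L^2$ of the resampling distribution) of $s^*-s_0$ onto the linear span of $w_1^*,\dots,w_n^*$. Then: (1) $\mathbb{E}_*[s^*w_j^*]=e_j$ for every $j$; (2) $l^*=\sum_{j=1}^n w_j^*\beta_j$ with $\beta_j=e_j-s_0$; (3) $\mathrm{Var}_*(l^* )=\mathrm{JK}_\mathrm{B}=\mathrm{IJ}_\mathrm{B}$, where $\mathrm{JK}_\mathrm{B}=\sum_{j=1}^n(e_j-s_0)^2$ and $\mathrm{IJ}_\mathrm{B}=\sum_{j=1}^n\mathrm{Cov}_*^2(s^*,w_j^* )$.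
   Context: The bootstrap resample is drawn conditionally on the data, so all starred quantities are computed with $x_1,\dots,x_n$ held fixed; $w^*=(w_1^*,\dots,w_n^* )$ is Multinomial$(n;1/n,\dots,1/n)$. *)

From mathcomp Require Import all_boot all_order all_algebra all_fingroup.
Set Implicit Arguments. Unset Strict Implicit. Unset Printing Implicit Defensive.
Import Order.TTheory GRing.Theory Num.Theory.
Local Open Scope ring_scope.

(* Outcomes of a bootstrap resample: I = (I_1,...,I_n), indices 0-based in 'I_n.
   The resampling distribution is uniform on all n^n such functions
   (i.e. I_1,...,I_n i.i.d. uniform on {1..n}). *)
Definition Omega (n : nat) := {ffun 'I_n -> 'I_n}.

Section Boot.
Variables (R : realFieldType) (n : nat).

Definition Estar (f : Omega n -> R) : R :=
  (#|{: Omega n}|%:R)^-1 * \sum_(I : Omega n) f I.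

Definition Covstar (f g : Omega n -> R) : R :=
  Estar (fun I => f I * g I) - Estar f * Estar g.

Definition Varstar (f : Omega n -> R) : R := Covstar f f.

Definition Econd (A : {set Omega n}) (f : Omega n -> R) : R :=
  (\sum_(I in A) f I) / #|A|%:R.

Definition wstar (j : 'I_n) (I : Omega n) : R := #|[set i | I i == j]|%:R.

Definition in_span_w (l : Omega n -> R) : Prop :=
  exists c : 'I_n -> R, forall I, l I = \sum_(j < n) c j * wstar j I.

Definition is_orth_proj_w (f l : Omega n -> R) : Prop :=
  in_span_w l /\ forall j : 'I_n, Estar (fun I => (f I - l I) * wstar j I) = 0.

End Boot.

Definition symmetric_fun (T : Type) (R : Type) (n : nat)
  (s : {ffun 'I_n -> T} -> R) : Prop :=
  forall (sigma : 'S_n) (v : {ffun 'I_n -> T}), s [ffun i => v (sigma i)] = s v.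

(* Under the resampling distribution the draws I_1, ..., I_n are independent
   and uniform, so E_*[w_j] = 1 and E_*[w_j w_k] = [j = k] + 1 - 1/n.  As s^* is
   invariant under permutations of the draws, E_*[s^* w_j] = n E_*[s^* 1{I_1 = j}],
   which is e_j.  The Gram matrix of the w_j is Id + (1 - 1/n) J, and since
   sum_j w_j = n the coefficients beta_j = Cov_*(s^*, w_j) sum to 0; this is what
   makes sum_j beta_j w_j solve the normal equations, uniquely, and gives it
   variance sum_j beta_j^2. *)

From mathcomp Require Import all_boot all_order all_algebra all_fingroup.
From mathcomp Require Import ring.
Import Order.TTheory GRing.Theory Num.Theory.
Local Open Scope ring_scope.
Set Implicit Arguments. Unset Strict Implicit. Unset Printing Implicit Defensive.

Section Resampling.
Variables (R : realFieldType) (n : nat).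

Local Notation Omega := (Omega n).
Local Notation Estar := (@Estar R n).
Local Notation w := (wstar R).

Definition draw_ind (i j : 'I_n) (I : Omega) : R := (I i == j)%:R.

Lemma eq_Estar (f g : Omega -> R) : f =1 g -> Estar f = Estar g.
Proof. by move=> fg; congr (_ * _); apply: eq_bigr => I _. Qed.

Lemma Estar_sum (F : 'I_n -> Omega -> R) :
  Estar (fun I => \sum_j F j I) = \sum_j Estar (F j).
Proof. by rewrite /Estar exchange_big mulr_sumr. Qed.

Lemma EstarZl a (f : Omega -> R) : Estar (fun I => a * f I) = a * Estar f.
Proof. by rewrite /Estar -mulr_sumr mulrCA. Qed.

Lemma EstarZr a (f : Omega -> R) : Estar (fun I => f I * a) = Estar f * a.
Proof. by rewrite /Estar -mulr_suml mulrA. Qed.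

Lemma EstarB (f g : Omega -> R) : Estar (fun I => f I - g I) = Estar f - Estar g.
Proof. by rewrite /Estar sumrB mulrBr. Qed.

Lemma card_Omega_neq0 : #|{: Omega}|%:R != 0 :> R.
Proof. by rewrite pnatr_eq0 -lt0n; apply/card_gt0P; exists [ffun i => i]. Qed.

Lemma Estar_cst (a : R) : Estar (fun _ => a) = a.
Proof.
by rewrite /Estar sumr_const -[a *+ _]mulr_natr mulrCA mulVf ?mulr1 ?card_Omega_neq0.
Qed.

Lemma Estar_prod_draws (F : 'I_n -> 'I_n -> R) :
  Estar (fun I => \prod_m F m (I m)) = \prod_m (n%:R^-1 * \sum_v F m v).
Proof.
rewrite /Estar -bigA_distr_bigA big_split /= card_ffun !card_ord natrX.
by rewrite prodr_const card_ord exprVn.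
Qed.

Lemma natr_ord_neq0 (i : 'I_n) : n%:R != 0 :> R.
Proof. by rewrite pnatr_eq0 -lt0n (leq_ltn_trans _ (ltn_ord i)). Qed.

Lemma sumr_pred1 (T : finType) (j : T) : \sum_(v : T) ((v == j)%:R : R) = 1.
Proof. by rewrite (bigD1 j) //= eqxx big1 ?addr0 // => v /negbTE ->. Qed.

Lemma Estar_draws_eq (S : {set 'I_n}) (t : 'I_n -> 'I_n) :
  Estar (fun I => \prod_(m in S) (I m == t m)%:R) = n%:R ^- #|S|.
Proof.
under eq_Estar do rewrite big_mkcond.
rewrite (Estar_prod_draws (fun m v => if m \in S then (v == t m)%:R else 1)).
rewrite -exprVn -prodr_const [RHS]big_mkcond; apply: eq_bigr => m _.
case: (m \in S); first by rewrite sumr_pred1 mulr1.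
by rewrite sumr_const card_ord mulVf ?natr_ord_neq0.
Qed.

Lemma Estar_draw (i j : 'I_n) : Estar (draw_ind i j) = n%:R^-1.
Proof.
rewrite (eq_Estar (g := fun I => \prod_(m in [set i]) (I m == j)%:R)) => [|I].
  by rewrite Estar_draws_eq cards1 expr1.
by rewrite big_set1.
Qed.

Lemma Estar_draw2 (i i' j j' : 'I_n) : i != i' ->
  Estar (fun I => draw_ind i j I * draw_ind i' j' I) = n%:R^-2.
Proof.
move=> neq_ii'; pose t m := if m == i then j else j'.
rewrite (eq_Estar (g := fun I => \prod_(m in [set i; i']) (I m == t m)%:R)) => [|I].
  by rewrite Estar_draws_eq cards2 neq_ii'.
by rewrite big_setU1 ?inE //= big_set1 /t eqxx [i' == i]eq_sym (negbTE neq_ii').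
Qed.

Lemma wstar_draws (j : 'I_n) (I : Omega) : w j I = \sum_i draw_ind i j I.
Proof.
rewrite /wstar -sum1_card natr_sum big_mkcond /=.
by apply: eq_bigr => i _; rewrite inE /draw_ind; case: eqP.
Qed.

Lemma sum_wstar (I : Omega) : \sum_j w j I = n%:R.
Proof.
rewrite (eq_bigr _ (fun (j : 'I_n) _ => wstar_draws j I)) exchange_big /=.
under eq_bigr do under eq_bigr do rewrite /draw_ind eq_sym.
by under eq_bigr do rewrite sumr_pred1; rewrite sumr_const card_ord.
Qed.

Lemma Estar_wstar (j : 'I_n) : Estar (w j) = 1.
Proof.
rewrite (eq_Estar (wstar_draws j)) Estar_sum.
under eq_bigr do rewrite Estar_draw.
by rewrite sumr_const card_ord -[_ *+ n]mulr_natr mulVf ?natr_ord_neq0.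
Qed.

Lemma draw_ind_mul i j k I :
  draw_ind i j I * draw_ind i k I = (j == k)%:R * draw_ind i j I.
Proof.
by rewrite /draw_ind; case: eqVneq => [->|_]; rewrite ?eqxx ?mul1r ?mulr1 ?mul0r ?mulr0.
Qed.

Lemma Estar_wstar2 (j k : 'I_n) :
  Estar (fun I => w j I * w k I) = (j == k)%:R + (1 - n%:R^-1).
Proof.
have n0 := natr_ord_neq0 j.
rewrite (eq_Estar (g := fun I => \sum_i \sum_i' draw_ind i j I * draw_ind i' k I));
  last by move=> I; rewrite !wstar_draws mulr_suml; under eq_bigr do rewrite mulr_sumr.
rewrite Estar_sum.
under eq_bigr => i _.
  rewrite Estar_sum (bigD1 i) //= (eq_Estar (draw_ind_mul i j k)) EstarZl Estar_draw.
  under eq_bigr => i' ne_i'i do rewrite Estar_draw2 1?eq_sym //.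
  rewrite sumr_const cardC1 card_ord.
over.
rewrite sumr_const card_ord -[_ *+ n.-1]mulr_natr -[_ *+ n]mulr_natr.
have -> : n.-1%:R = n%:R - 1 :> R.
  by rewrite -[in RHS](prednK (leq_ltn_trans _ (ltn_ord j))) // -natr1 addrK.
by field.
Qed.

Definition permute_draws (sg : 'S_n) (I : Omega) : Omega := [ffun m => I (sg m)].

Lemma permute_drawsK sg : cancel (permute_draws sg) (permute_draws sg^-1).
Proof. by move=> I; apply/ffunP => m; rewrite !ffunE permKV. Qed.

Lemma Estar_permute_draws sg (f : Omega -> R) :
  Estar (fun I => f (permute_draws sg I)) = Estar f.
Proof. by rewrite /Estar [in RHS](reindex_inj (can_inj (permute_drawsK sg))). Qed.

Lemma Econd_Estar (A : {set Omega}) (f : Omega -> R) :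
  Econd A f = Estar (fun I => f I * (I \in A)%:R) / Estar (fun I => (I \in A)%:R).
Proof.
rewrite /Econd /Estar invfM invrK mulrACA mulVf ?card_Omega_neq0 // mul1r.
rewrite -sum1_card natr_sum big_mkcond [X in _ / X]big_mkcond /=.
by congr (_ / _); apply: eq_bigr => I _; case: (I \in A); rewrite ?mulr1 ?mulr0.
Qed.

Section SymmetricStatistic.
Variable f : Omega -> R.
Hypothesis f_sym : forall sg I, f (permute_draws sg I) = f I.

Lemma Estar_mul_draw_sym (i i' j : 'I_n) :
  Estar (fun I => f I * draw_ind i j I) = Estar (fun I => f I * draw_ind i' j I).
Proof.
rewrite -(Estar_permute_draws (tperm i i')); apply: eq_Estar => I.
by rewrite f_sym /draw_ind ffunE tpermL.
Qed.

Lemma Estar_mul_wstar (i0 j : 'I_n) :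
  Estar (fun I => f I * w j I) = Econd [set I : Omega | I i0 == j] f.
Proof.
under eq_Estar do rewrite wstar_draws mulr_sumr.
rewrite Estar_sum (eq_bigr _ (fun i _ => Estar_mul_draw_sym i i0 j)) sumr_const card_ord.
have setE I : (I \in [set I : Omega | I i0 == j])%:R = draw_ind i0 j I by rewrite inE.
rewrite Econd_Estar (eq_Estar setE) Estar_draw invrK mulr_natr.
by under [in RHS]eq_Estar do rewrite setE.
Qed.

End SymmetricStatistic.

Definition wcomb (d : 'I_n -> R) (I : Omega) : R := \sum_j w j I * d j.

Lemma Estar_wcomb d : Estar (wcomb d) = \sum_j d j.
Proof.
rewrite Estar_sum; apply: eq_bigr => j _.
by rewrite EstarZr Estar_wstar mul1r.
Qed.

Lemma Estar_wcomb_wstar d (k : 'I_n) :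
  Estar (fun I => wcomb d I * w k I) = d k + (1 - n%:R^-1) * \sum_j d j.
Proof.
under eq_Estar do rewrite /wcomb mulr_suml.
under eq_Estar do under eq_bigr do rewrite mulrAC.
rewrite Estar_sum; under eq_bigr do rewrite EstarZr Estar_wstar2 mulrDl [_ * d _]mulrC.
rewrite big_split /= -mulr_sumr (bigD1 k) //= eqxx mulr1 big1 ?addr0 //.
by move=> j /negbTE->; rewrite mulr0.
Qed.

Lemma sum_Estar_mul_wstar (f : Omega -> R) :
  \sum_j Estar (fun I => f I * w j I) = n%:R * Estar f.
Proof.
rewrite -Estar_sum mulrC -EstarZr.
by apply: eq_Estar => I; rewrite -mulr_sumr sum_wstar.
Qed.

Lemma Covstar_wstar (f : Omega -> R) j :
  Covstar f (w j) = Estar (fun I => f I * w j I) - Estar f.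
Proof. by rewrite /Covstar Estar_wstar mulr1. Qed.

Section Projection.
Variables (g : Omega -> R) (b : 'I_n -> R).
Hypothesis Estar_g : Estar g = 0.
Hypothesis Estar_g_wstar : forall j, Estar (fun I => g I * w j I) = b j.

Lemma sum_proj_coef_eq0 : \sum_j b j = 0.
Proof.
by rewrite -(eq_bigr _ (fun j _ => Estar_g_wstar j)) sum_Estar_mul_wstar Estar_g mulr0.
Qed.

Lemma wcomb_orth_coef (c : 'I_n -> R) :
  (forall k, Estar (fun I => wcomb c I * w k I) = b k) -> c =1 b.
Proof.
move=> orth k; have n0 := natr_ord_neq0 k.
have coefE j : b j = c j + (1 - n%:R^-1) * \sum_i c i by rewrite -orth Estar_wcomb_wstar.
have sum_c0 : \sum_i c i = 0.
  apply: (mulIf n0); rewrite mul0r -[RHS]sum_proj_coef_eq0 (eq_bigr _ (fun j _ => coefE j)).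
  by rewrite big_split /= sumr_const card_ord -[_ *+ n]mulr_natl; field.
by rewrite coefE sum_c0 mulr0 addr0.
Qed.

Lemma wcomb_orth_proj : is_orth_proj_w g (wcomb b).
Proof.
split.
  by exists b => I; apply: eq_bigr => j _; rewrite mulrC.
move=> k; under eq_Estar do rewrite mulrBl.
by rewrite EstarB Estar_g_wstar Estar_wcomb_wstar sum_proj_coef_eq0 mulr0 addr0 subrr.
Qed.

Lemma orth_proj_w_unique (l : Omega -> R) : is_orth_proj_w g l -> l =1 wcomb b.
Proof.
move=> [[c lE] orth] I.
have l_wcomb : l =1 wcomb c by move=> J; rewrite lE; apply: eq_bigr => j _; rewrite mulrC.
rewrite l_wcomb; apply: eq_bigr => j _; congr (_ * _); apply: wcomb_orth_coef => k.
apply/eqP; rewrite -Estar_g_wstar eq_sym -subr_eq0 -EstarB -(orth k).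
by apply/eqP/eq_Estar => J; rewrite mulrBl l_wcomb.
Qed.

Lemma Varstar_wcomb : Varstar (wcomb b) = \sum_j b j ^+ 2.
Proof.
rewrite /Varstar /Covstar Estar_wcomb sum_proj_coef_eq0 mulr0 subr0.
under eq_Estar do rewrite [X in _ * X]/wcomb mulr_sumr.
under eq_Estar do under eq_bigr do rewrite mulrA.
rewrite Estar_sum; apply: eq_bigr => j _.
by rewrite EstarZr Estar_wcomb_wstar sum_proj_coef_eq0 mulr0 addr0 expr2.
Qed.

End Projection.

End Resampling.

Theorem theorem1 (R : realFieldType) (T : Type) (n : nat) (hn : (0 < n)%N)
  (x : 'I_n -> T) (s : {ffun 'I_n -> T} -> R) (hs : symmetric_fun s) :
  let sstar := fun I : Omega n => s [ffun i => x (I i)] in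
  let s0 := Estar sstar in
  let e := fun j : 'I_n => Econd [set I : Omega n | I (Ordinal hn) == j] sstar in
  let lstar := fun I : Omega n => \sum_(j < n) wstar R j I * (e j - s0) in
  let JK := \sum_(j < n) (e j - s0) ^+ 2 in
  let IJ := \sum_(j < n) (Covstar sstar (wstar R j)) ^+ 2 in
  (* (1) *)
  (forall j : 'I_n, Estar (fun I => sstar I * wstar R j I) = e j) /\
  (* (2): sum_j w_j beta_j is the orthogonal projection of s^* - s0 onto span{w_j}
          (and it is the unique one) *)
  (is_orth_proj_w (fun I => sstar I - s0) lstar /\
   forall l : Omega n -> R, is_orth_proj_w (fun I => sstar I - s0) l ->
     forall I, l I = lstar I) /\
  (* (3) *)
  Varstar lstar = JK /\ JK = IJ.
Proof.
move=> sstar s0 e lstar JK IJ.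
have sstar_sym sg I : sstar (permute_draws sg I) = sstar I.
  by rewrite /sstar -(hs sg [ffun i => x (I i)]); congr s; apply/ffunP => m; rewrite !ffunE.
have sstar_wstar j : Estar (fun I => sstar I * wstar R j I) = e j.
  exact: Estar_mul_wstar sstar_sym (Ordinal hn) j.
have centered : Estar (fun I => sstar I - s0) = 0 by rewrite EstarB Estar_cst subrr.
have centered_wstar j : Estar (fun I => (sstar I - s0) * wstar R j I) = e j - s0.
  under eq_Estar do rewrite mulrBl.
  by rewrite EstarB EstarZl Estar_wstar mulr1 sstar_wstar.
split; first exact: sstar_wstar.
split; first split.
- exact: wcomb_orth_proj centered centered_wstar.
- exact: orth_proj_w_unique centered centered_wstar.
split; first exact: Varstar_wcomb centered centered_wstar.
by apply: eq_bigr => j _; rewrite Covstar_wstar sstar_wstar.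
Qed.
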